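(* If $H$ is a finite simple connected graph of order at least $3$, then the Cartesian product $K_2 \,\square\, H$ is not well-dominated.
   Context: A graph is well-dominated if every minimal (with respect to inclusion) dominating set is a minimum dominating set. The Cartesian product $G\,\square\, H$ has vertex set $V(G)\times V(H)$, with $(g_1,h_1)$ adjacent to $(g_2,h_2)$ iff either ($g_1=g_2$ and $h_1h_2\in E(H)$) or ($h_1=h_2$ and $g_1g_2\in E(G)$). *)

From mathcomp Require Import all_boot.
Set Implicit Arguments. Unset Strict Implicit. Unset Printing Implicit Defensive.

Definition simple_graph (T : finType) (e : rel T) : Prop :=
  symmetric e /\ irreflexive e.

Definition connected_graph (T : finType) (e : rel T) : Prop :=
  forall x y : T, connect e x y.

Definition K2_rel : rel bool := fun a b => a != b.

Definition cart_rel (T1 T2 : finType) (e1 : rel T1) (e2 : rel T2)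
  : rel (T1 * T2) :=
  fun u v => ((u.1 == v.1) && e2 u.2 v.2) || ((u.2 == v.2) && e1 u.1 v.1).

Definition dominating (T : finType) (e : rel T) (D : {set T}) : bool :=
  [forall v, (v \in D) || [exists u in D, e v u]].

Definition minimal_dominating (T : finType) (e : rel T) (D : {set T}) : bool :=
  dominating e D && [forall D' : {set T}, (D' \proper D) ==> ~~ dominating e D'].

Definition minimum_dominating (T : finType) (e : rel T) (D : {set T}) : bool :=
  dominating e D && [forall D' : {set T}, dominating e D' ==> (#|D| <= #|D'|)].

Definition well_dominated (T : finType) (e : rel T) : Prop :=
  forall D : {set T}, minimal_dominating e D -> minimum_dominating e D.

(* A connected graph H on at least three vertices has a path a - v - b.  In
   K_2 [] H, with K_2 on {false, true}, the layer {false} x V(H) is a minimal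
   dominating set, because each (true, h) has (false, h) as its only neighbour
   in that layer.  Yet replacing (false, v) and (false, b) by the single
   vertex (true, b) still dominates: (true, b) covers (true, v) and
   (false, b), and (false, a) covers (false, v).  So a minimal dominating set
   of size |H| coexists with a dominating set of size |H| - 1. *)
From mathcomp Require Import all_boot.

Set Implicit Arguments.
Unset Strict Implicit.
Unset Printing Implicit Defensive.

Lemma card_le2_of_neighbour_uniq (T : finType) (e : rel T) :
  symmetric e -> connected_graph e ->
  (forall v a b, e v a -> e v b -> a = b) -> #|T| <= 2.
Proof.
move=> sym_e con uniq_nbr.
case: (pickP (@predT T)) => [x _ | T0]; last by rewrite eq_card0.
pose N := [set w | e x w].
have closed_xN : closed e (mem (x |: N)).
  apply: intro_closed; first exact: sym_connect_sym.
  move=> u w euw; rewrite !inE => /orP[/eqP uE | exu]; first by rewrite -uE euw orbT.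
  by rewrite (uniq_nbr u w x) ?eqxx // sym_e.
have subT_xN : [set: T] \subset x |: N.
  by apply/subsetP => w _; rewrite -(closed_connect closed_xN (con x w)) !inE eqxx.
have N_le1 : #|N| <= 1 by apply/card_le1_eqP => a b /[!inE] exa exb; exact: uniq_nbr exb exa.
rewrite -cardsT (leq_trans (subset_leq_card subT_xN)) // cardsU1.
exact: leq_add (leq_b1 _) N_le1.
Qed.

Lemma exists_two_neighbours (T : finType) (e : rel T) :
  symmetric e -> connected_graph e -> 2 < #|T| ->
  exists v a b, [/\ e v a, e v b & a != b].
Proof.
move=> sym_e con T_gt2.
have [/existsP[v /existsP[a /existsP[b /and3P[eva evb nab]]]] | no_fork] :=
  boolP [exists v, exists a, exists b, [&& e v a, e v b & a != b]].
  by exists v, a, b.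
suff: #|T| <= 2 by rewrite leqNgt T_gt2.
apply: card_le2_of_neighbour_uniq => // v a b eva evb; apply/eqP.
apply: contraNT no_fork => nab; apply/existsP; exists v; apply/existsP; exists a.
by apply/existsP; exists b; rewrite eva evb nab.
Qed.

Lemma not_well_dominated (T : finType) (e : rel T) (S D : {set T}) :
  minimal_dominating e S -> dominating e D -> #|D| < #|S| -> ~ well_dominated e.
Proof.
move=> S_min D_dom ltDS /(_ S S_min) /andP[_ /forallP/(_ D)].
by rewrite D_dom leqNgt ltDS.
Qed.

Section PrismOverGraph.

Variables (T : finType) (e : rel T).

Local Notation prism := (cart_rel K2_rel e).

Lemma prismE c h c' h' :
  prism (c, h) (c', h') = ((c == c') && e h h') || ((h == h') && (c != c')).
Proof. by []. Qed.

Definition layer (c : bool) : {set bool * T} := setX [set c] [set: T].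

Lemma mem_layer c c' h : ((c', h) \in layer c) = (c' == c).
Proof. by rewrite !inE andbT. Qed.

Lemma card_layer c : #|layer c| = #|T|.
Proof. by rewrite cardsX cards1 cardsT mul1n. Qed.

Lemma layer_dominating c : dominating prism (layer c).
Proof.
apply/forallP => -[c' h]; rewrite mem_layer; have [// | ncc'] := eqVneq c' c.
by apply/existsP; exists (c, h); rewrite mem_layer prismE !eqxx ncc' orbT.
Qed.

Lemma layer_minimal_dominating c : minimal_dominating prism (layer c).
Proof.
have negc_neq : (~~ c == c) = false by case: c.
rewrite /minimal_dominating layer_dominating; apply/forallP => D; apply/implyP.
move=> /properP[subD [[c' h] /[!mem_layer] /eqP-> hD]].
apply/negP => /forallP/(_ (~~ c, h)) /orP[/(subsetP subD) | /existsP[[c'' h'] /andP[h'D]]].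
  by rewrite mem_layer negc_neq.
have /[!mem_layer] /eqP c''E := subsetP subD _ h'D; rewrite c''E in h'D *.
by rewrite prismE negc_neq /= andbT => /eqP hE; rewrite hE h'D in hD.
Qed.

Lemma prism_small_dominating v a b :
  e v a -> e v b -> a != b -> v != a -> v != b ->
  exists2 D : {set bool * T}, dominating prism D & #|D| < #|T|.
Proof.
move=> eva evb nab nva nvb.
pose D := (true, b) |: (layer false :\ (false, v) :\ (false, b)).
have inD c h : ((c, h) \in D) = (c && (h == b)) || [&& ~~ c, h != v & h != b].
  by rewrite !inE /=; case: c => //=; rewrite andbT andbC.
exists D.
  apply/forallP => -[c h]; rewrite inD; case: c => /=.
  - have [-> // | nhb] := eqVneq h b; apply/existsP.
    have [-> | nhv] := eqVneq h v; first by exists (true, b); rewrite inD eqxx prismE evb.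
    by exists (false, h); rewrite inD nhv nhb prismE eqxx.
  - have [-> | nhv] := eqVneq h v.
      by apply/existsP; exists (false, a); rewrite inD /= [a == v]eq_sym nva nab prismE eva.
    have [-> | nhb] := eqVneq h b; last by [].
    by apply/existsP; exists (true, b); rewrite inD prismE !eqxx.
have := cardsD1 (false, v) (layer false); rewrite card_layer mem_layer eqxx.
have := cardsD1 (false, b) (layer false :\ (false, v)); rewrite !inE eqxx eq_sym nvb.
by rewrite cardsU1 => -> ->; rewrite addnA ltn_add2r; exact: leq_b1.
Qed.

End PrismOverGraph.

Theorem proposition22 (T : finType) (e : rel T) :
  simple_graph e -> connected_graph e -> 3 <= #|T| ->
  ~ well_dominated (cart_rel K2_rel e).
Proof.
move=> [sym_e irr_e] con T_ge3.
have [v [a [b [eva evb nab]]]] := exists_two_neighbours sym_e con T_ge3.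
have nva : v != a by apply: contraTneq eva => <-; rewrite irr_e.
have nvb : v != b by apply: contraTneq evb => <-; rewrite irr_e.
have [D D_dom ltDT] := prism_small_dominating eva evb nab nva nvb.
apply: (not_well_dominated (layer_minimal_dominating e false) D_dom).
by rewrite card_layer.
Qed.
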